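(* Let $P$ be the uniform distribution on $[0,1]$ and $\beta=\{\frac14,\frac12\}$. The conditional optimal set of three-points for $P$ with respect to $\beta$ is $\alpha_3=\{\frac14,\frac12,\frac56\}$, with $V_3=\frac{77}{6912}$ ($\approx0.01114$).
   Context: For a Borel probability measure $P$ on $\mathbb{R}$ and finite $\beta$ with $\mathrm{card}(\beta)=r$, for $n\ge r$, $V_n=\inf\{\int\min_{a\in\alpha\cup\beta}(x-a)^2dP(x):\mathrm{card}(\alpha)\le n-r\}$; a set $\alpha\cup\beta$ attaining the infimum, with each point of $\beta$ having a Voronoi region of positive $P$-measure, is a conditional optimal set of $n$-points with respect to $\beta$. *)

From HB Require Import structures.
From mathcomp Require Import all_boot all_order all_algebra finmap.
From mathcomp Require Import all_classical all_reals all_analysis.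
Set Implicit Arguments. Unset Strict Implicit. Unset Printing Implicit Defensive.
Import Order.TTheory GRing.Theory Num.Theory.
Local Open Scope classical_set_scope.
Local Open Scope fset_scope.
Local Open Scope ring_scope.

Section CondQuant.
Variables (R : realType) (P : probability (measurableTypeR R) R).

Definition sqdist (S : {fset R}) (x : R) : \bar R :=
  \big[Order.min/+oo%E]_(a <- S) ((x - a) ^+ 2)%:E.

Definition distortion (S : {fset R}) : \bar R :=
  (\int[P]_x sqdist S x)%E.

Definition condV (beta : {fset R}) (n : nat) : \bar R :=
  ereal_inf [set distortion (alpha `|` beta) | alpha in
               [set alpha : {fset R} | (#|` alpha| <= n - #|` beta|)%N]].

Definition voronoi (S : {fset R}) (b : R) : set R :=
  [set x | forall a, a \in S -> `|x - b| <= `|x - a|].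

Definition cond_optimal (beta : {fset R}) (n : nat) (S : {fset R}) : Prop :=
  (#|` beta| <= n)%N /\
  exists alpha : {fset R}, [/\ (#|` alpha| <= n - #|` beta|)%N,
    S = alpha `|` beta,
    distortion S = condV beta n &
    forall b, b \in beta -> (0 < P (voronoi S b))%E].

End CondQuant.

From HB Require Import structures.
From mathcomp Require Import all_boot all_order all_algebra finmap.
From mathcomp Require Import all_classical all_reals all_analysis.
From mathcomp Require Import measurable_realfun ring lra.
Import Order.TTheory GRing.Theory Num.Theory.
Import numFieldNormedType.Exports.
Local Open Scope classical_set_scope.
Local Open Scope fset_scope.
Local Open Scope ring_scope.

(* Since beta has two points, an admissible alpha has at most one point a, so
   the candidate sets are {a, 1/4, 1/2}.  If a <= 1/2 or a >= 3/2, the point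
   1/2 is nearest on [1/2, 1], which alone costs 1/24.  Otherwise the Voronoi
   cells are [0, 3/8], [3/8, (a + 1/2)/2] and [(a + 1/2)/2, 1]; integrating the
   squared distance cell by cell gives the distortion
   77/6912 + (a - 5/6)^2 (11 - 6a)/24, which is minimal exactly at a = 5/6. *)

Lemma ler_norm_sqr (R : realDomainType) (u v : R) :
  (`|u| <= `|v|) = (u ^+ 2 <= v ^+ 2).
Proof. by rewrite -ler_sqr ?nnegrE ?normr_ge0 // !real_normK ?num_real. Qed.

Lemma fsetU_fset2_card_le1 (K : choiceType) (alpha : {fset K}) (b c : K) :
  (#|` alpha| <= 1)%N -> exists a, alpha `|` [fset b; c] = [fset a; b; c].
Proof.
rewrite leq_eqVlt ltnS leqn0 => /orP[/cardfs1P[a ->]|/eqP/cardfs0_eq ->].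
- by exists a; rewrite fsetUA.
- by exists b; rewrite fset0U fsetUid.
Qed.

Section sqdist_on_the_line.
Context {R : realType}.
Notation mu := (@lebesgue_measure R).
Implicit Types (S : {fset R}) (a b c p l r x : R).

Lemma sqdist_ge0 S x : (0 <= sqdist S x)%E.
Proof. by apply: le_bigmin => [|p _]; rewrite ?leey ?lee_fin ?sqr_ge0. Qed.

Lemma measurable_sqdist S : measurable_fun setT (sqdist S).
Proof.
rewrite /sqdist; elim: (enum_fset S) => [|p s IH].
  by apply: eq_measurable_fun (measurable_cst +oo%E) => x _; rewrite big_nil.
have msqr : measurable_fun setT (fun x => ((x - p) ^+ 2)%:E).
  by apply/measurable_EFinP/measurable_funX/measurable_funB.
by apply: eq_measurable_fun (measurable_mine msqr IH) => x _; rewrite big_cons.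
Qed.

Lemma sqdist_voronoi S p x :
  p \in S -> voronoi S p x -> sqdist S x = ((x - p) ^+ 2)%:E.
Proof.
move=> pS px; rewrite /sqdist big_seq; apply/le_anti/andP; split.
  exact: ge_bigmin_seq.
apply: le_bigmin => [|q qS]; first exact: leey.
by rewrite lee_fin -ler_norm_sqr; apply: px.
Qed.

Lemma measurable_voronoi S p : measurable (voronoi S p).
Proof.
have -> : voronoi S p = \bigcap_(a in [set` S]) [set x | `|x - p| <= `|x - a|].
  by apply/seteqP; split=> x /= px a; apply: px.
apply: fin_bigcap_measurable => [|a _]; first exact: finite_fset.
rewrite -[X in measurable X]setTI.
by apply: measurable_fun_ler => //; apply: measurableT_comp => //; apply: measurable_funB.
Qed.

Lemma itv_sub_voronoi_fset3 a b c p l r :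
  (forall x, l <= x <= r -> (x - p) ^+ 2 <= (x - a) ^+ 2) ->
  (forall x, l <= x <= r -> (x - p) ^+ 2 <= (x - b) ^+ 2) ->
  (forall x, l <= x <= r -> (x - p) ^+ 2 <= (x - c) ^+ 2) ->
  (`[l, r] `<=` voronoi [fset a; b; c] p)%classic.
Proof.
move=> pa pb pc x /=; rewrite in_itv /= => lxr q.
by rewrite !inE -orbA ler_norm_sqr => /or3P[]/eqP->; [exact: pa|exact: pb|exact: pc].
Qed.

Lemma integral_itv_sqrB p c d : c < d ->
  (\int[mu]_(x in `[c, d]) ((x - p) ^+ 2)%:E =
   (((d - p) ^+ 3 - (c - p) ^+ 3) / 3)%:E)%E.
Proof.
move=> cd.
pose q : {poly R} := 3^-1 *: (('X - p%:P) * ('X - p%:P) * ('X - p%:P)).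
have qE x : q.[x] = 3^-1 * (x - p) ^+ 3 by rewrite /q !hornerE; ring.
rewrite (continuous_FTC2 (F := horner q) cd).
- by rewrite !qE -EFinB; congr (_%:E); ring.
- apply: continuous_subspaceT => x.
  have -> : (fun x => (x - p) ^+ 2) = horner (('X - p%:P) ^+ 2).
    by apply/funext => y; rewrite !hornerE.
  exact: continuous_horner.
- split.
  + by move=> x _; exact: derivable_horner.
  + exact/cvg_at_right_filter/continuous_horner.
  + exact/cvg_at_left_filter/continuous_horner.
- move=> x _; rewrite derive1E (@derive_val _ _ _ _ _ _ _ (is_derive_poly q x)).
  by rewrite /q !(derivZ, derivM, derivB, derivX, derivC) !hornerE; field.
Qed.

Lemma integral_sqdist_cell S p c d : c < d -> p \in S ->
  (`[c, d] `<=` voronoi S p)%classic ->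
  (\int[mu]_(x in `[c, d]) sqdist S x =
   (((d - p) ^+ 3 - (c - p) ^+ 3) / 3)%:E)%E.
Proof.
move=> cd pS cell; rewrite -integral_itv_sqrB //.
by apply: eq_integral => x /[!inE] /cell; exact: sqdist_voronoi.
Qed.

Lemma ge0_integral_itv_split (f : R -> \bar R) c d e :
  measurable_fun setT f -> (forall x, 0 <= f x)%E -> c <= d -> d <= e ->
  (\int[mu]_(x in `[c, e]) f x =
   \int[mu]_(x in `[c, d]) f x + \int[mu]_(x in `[d, e]) f x)%E.
Proof.
move=> mf f0 cd de.
rewrite (@itv_bndbnd_setU _ _ (BLeft c) (BRight d) (BRight e)) ?bnd_simp //.
rewrite ge0_integral_setU //=; last 2 first.
- exact: measurable_funTS.
- apply/disj_setPS => x [/=]; rewrite !in_itv/= => /andP[_ xd] /andP[dx _].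
  by move: (lt_le_trans dx xd); rewrite ltxx.
by rewrite integral_itv_obnd_cbnd //; exact: measurable_funTS.
Qed.

End sqdist_on_the_line.

Section uniform_distribution.
Context {R : realType} (a b : R) (ab : a < b).
Notation mu := (@lebesgue_measure R).

Lemma uniform_prob_itv c d : a <= c -> c < d -> d <= b ->
  uniform_prob ab `[c, d] = ((d - c) / (b - a))%:E.
Proof.
move=> ac cd db; rewrite /uniform_prob (eq_integral (fun=> ((b - a)^-1)%:E)).
  by rewrite integral_cst //= lebesgue_measure_itv /= lte_fin cd -EFinD -EFinM mulrC.
move=> x /[!inE] /= /[!in_itv] /andP[cx xd].
by rewrite /uniform_pdf ifT //; apply/andP; split; [exact: le_trans cx|exact: le_trans db].
Qed.

Lemma uniform_prob_gt0 (U : set R) c d : measurable U ->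
  a <= c -> c < d -> d <= b -> (`[c, d] `<=` U)%classic -> (0 < uniform_prob ab U)%E.
Proof.
move=> mU ac cd db cdU; apply: (@lt_le_trans _ _ (uniform_prob ab `[c, d])).
  by rewrite uniform_prob_itv // lte_fin divr_gt0 // subr_gt0.
by apply: le_measure => //; rewrite inE.
Qed.

Lemma distortion_uniform S : distortion (uniform_prob ab) S =
  (((b - a)^-1)%:E * \int[mu]_(x in `[a, b]) sqdist S x)%E.
Proof. exact: integral_uniform (measurable_sqdist S) (sqdist_ge0 S). Qed.

End uniform_distribution.

Section quarter_half_example.
Context {R : realType}.
Notation mu := (@lebesgue_measure R).
Notation P := (uniform_prob (@ltr01 R)).
Notation centers a := [fset a; 4^-1; 2^-1].
Notation D a := (distortion P (centers a)).
Implicit Types a : R.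

Let D_integral a :
  D a = (\int[mu]_(x in `[0%R, 1%R]) sqdist (centers a) x)%E.
Proof. by rewrite distortion_uniform subr0 invr1 mul1e. Qed.

Lemma distortion_far a : a <= 2^-1 \/ 3 / 2 <= a -> ((24^-1)%:E <= D a)%E.
Proof.
move=> far; rewrite D_integral.
have -> : 24^-1 = ((1 - 2^-1) ^+ 3 - (2^-1 - 2^-1) ^+ 3) / 3 :> R by field.
rewrite -(@integral_sqdist_cell _ (centers a) 2^-1) //; last 3 first.
- lra.
- by rewrite !inE eqxx orbT.
- by apply: itv_sub_voronoi_fset3 => x /andP[? ?]; nra.
apply: ge0_subset_integral => //.
- exact: measurable_funTS (measurable_sqdist _).
- by move=> x _; exact: sqdist_ge0.
- by apply: subset_itvr; rewrite bnd_simp; lra.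
Qed.

Lemma distortion_mid a : 2^-1 < a < 3 / 2 ->
  D a = (77 / 6912 + (a - 5 / 6) ^+ 2 * ((11 - 6 * a) / 24))%:E.
Proof.
move=> /andP[a1 a2].
have msq := @measurable_sqdist R (centers a).
have sq0 := @sqdist_ge0 R (centers a).
rewrite D_integral (ge0_integral_itv_split _ 0 (3 / 8) 1 msq sq0); [|lra|lra].
rewrite (ge0_integral_itv_split _ (3 / 8) ((a + 2^-1) / 2) 1 msq sq0); [|lra|lra].
rewrite (@integral_sqdist_cell _ _ 4^-1); [|lra| |]; last 2 first.
- by rewrite !inE eqxx !orbT.
- by apply: itv_sub_voronoi_fset3 => x /andP[? ?]; nra.
rewrite (@integral_sqdist_cell _ _ 2^-1); [|lra| |]; last 2 first.
- by rewrite !inE eqxx !orbT.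
- by apply: itv_sub_voronoi_fset3 => x /andP[? ?]; nra.
rewrite (@integral_sqdist_cell _ _ a); [|lra| |]; last 2 first.
- by rewrite !inE eqxx.
- by apply: itv_sub_voronoi_fset3 => x /andP[? ?]; nra.
by rewrite -!EFinD; congr EFin; field.
Qed.

Lemma distortion_leif a : ((77 / 6912)%:E <= D a ?= iff (a == 5 / 6))%O.
Proof.
have [mid|not_mid] := boolP (2^-1 < a < 3 / 2).
- rewrite distortion_mid //; move/andP: mid => [_ a2]; split.
    by rewrite lee_fin lerDl mulr_ge0 ?sqr_ge0 // divr_ge0 //; lra.
  have pos : 0 < (11 - 6 * a) / 24 by lra.
  rewrite eqe -subr_eq0 opprD addrA subrr add0r oppr_eq0 mulf_eq0 (gt_eqF pos).
  by rewrite orbF sqrf_eq0 subr_eq0.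
- have far : a <= 2^-1 \/ 3 / 2 <= a.
    by move: not_mid; rewrite negb_and -!leNgt => /orP.
  have lt_far : ((77 / 6912)%R%:E < D a)%E.
    by apply: (lt_le_trans _ (distortion_far a far)); rewrite lte_fin; lra.
  split; first exact: ltW.
  by rewrite lt_eqF //; apply/esym/negbTE; apply/eqP => a56; case: far; lra.
Qed.

Lemma voronoi_centers_gt0 b : b \in [fset 4^-1; 2^-1] ->
  (0 < P (voronoi (centers (5 / 6)%R) b))%E.
Proof.
rewrite !inE => /orP[]/eqP->.
- apply: (@uniform_prob_gt0 _ _ _ _ _ 0 (3 / 8));
    [exact: measurable_voronoi|lra|lra|lra|].
  by apply: itv_sub_voronoi_fset3 => x /andP[? ?]; nra.
- apply: (@uniform_prob_gt0 _ _ _ _ _ (3 / 8) (2 / 3));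
    [exact: measurable_voronoi|lra|lra|lra|].
  by apply: itv_sub_voronoi_fset3 => x /andP[? ?]; nra.
Qed.

End quarter_half_example.

Theorem proposition3p2 (R : realType) :
  let P := uniform_prob (@ltr01 R) in
  let beta : {fset R} := [fset 4^-1; 2^-1] in
  let alpha3 : {fset R} := [fset 4^-1; 2^-1; 5 / 6] in
  [/\ cond_optimal P beta 3 alpha3,
      (forall S, cond_optimal P beta 3 S -> S = alpha3) &
      condV P beta 3 = (77 / 6912 : R)%:E].
Proof.
move=> P beta alpha3.
have card_beta : #|` beta| = 2%N by rewrite cardfs2; case: eqP => // ?; exfalso; lra.
have admissible alpha : (#|` alpha| <= 3 - #|` beta|)%N ->
    exists a, alpha `|` beta = [fset a; 4^-1; 2^-1].
  by rewrite card_beta; exact: fsetU_fset2_card_le1.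
have alpha3E : alpha3 = [fset 5 / 6] `|` beta by rewrite /alpha3 fsetUC.
have D56 : distortion P alpha3 = (77 / 6912)%:E.
  by rewrite alpha3E fsetUA; apply/esym/eqP; rewrite (distortion_leif _).2.
have V3 : condV P beta 3 = (77 / 6912)%:E.
  apply/le_anti/andP; split.
    rewrite -D56 alpha3E; apply: ereal_inf_lbound.
    by exists [fset 5 / 6]; rewrite //= cardfs1 card_beta.
  apply: le_ereal_inf_tmp => _ [alpha /admissible[a ->] <-].
  exact: (distortion_leif a).1.
split => //.
- split; first by rewrite card_beta.
  exists [fset 5 / 6]; split => //; first by rewrite cardfs1 card_beta.
  + by rewrite D56 V3.
  + by rewrite alpha3E fsetUA; exact: voronoi_centers_gt0.
- move=> S [_ [alpha [/admissible[a Ea] -> DS _]]].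
  rewrite Ea alpha3E fsetUA; congr [fset _; _; _]; apply/eqP.
  by rewrite -(distortion_leif a).2 -Ea DS V3.
Qed.
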